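(* Let $A=[a_{ij}]\in\{0,1\}^{N\times N}$ be the adjacency matrix of a static contact graph on nodes $\{1,\dots,N\}$ (with $a_{ii}=0$) and let $\rho(A)$ be its spectral radius. Let $\beta_0>0$, $\delta>0$, $\kappa>0$ and $0\le\beta_a<\beta_0$, and consider the SAIS system \[ \dot p_i=\beta_0(1-p_i-q_i)\sum_{j=1}^N a_{ij}p_j+\beta_a q_i\sum_{j=1}^N a_{ij}p_j-\delta p_i,\qquad \dot q_i=\kappa(1-p_i-q_i)\sum_{j=1}^N a_{ij}p_j-\beta_a q_i\sum_{j=1}^N a_{ij}p_j, \] $i\in\{1,\dots,N\}$, with initial data that are probabilities ($p_i,q_i\ge0$, $p_i+q_i\le 1$). If the infection strength satisfies \[ \tau=\frac{\beta_0}{\delta}<\frac{1}{\rho(A)}, \] then initial infections die out exponentially, i.e. each $p_i(t)$ converges to $0$ exponentially as $t\to\infty$.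
   Context: $p_i$ and $q_i$ are the (mean-field) probabilities that individual $i$ is infected and alert; $a_{ij}=1$ iff individual $j$ is a neighbor of individual $i$. $\beta_0$: infection rate of susceptible individuals; $\beta_a$: infection rate of alert individuals; $\kappa$: alerting rate; $\delta$: curing rate. $\rho(A)$ is the largest modulus of the eigenvalues of $A$. *)

From HB Require Import structures.
From mathcomp Require Import all_boot all_order all_algebra.
From mathcomp Require Import all_classical all_reals all_analysis.
From mathcomp Require Import complex.
Set Implicit Arguments. Unset Strict Implicit. Unset Printing Implicit Defensive.
Import Order.TTheory GRing.Theory Num.Theory numFieldNormedType.Exports.
Local Open Scope ring_scope.
Local Open Scope classical_set_scope.

Definition spectral_radius (R : realType) (n : nat) (A : 'M[R]_n) : R :=
  sup [set r : R | exists z : R[i],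
         eigenvalue (map_mx (fun x : R => Complex x 0) A) z /\ r = Normc.normc z].

Definition adjacency01 (R : realType) (N : nat) (A : 'M[R]_N) : Prop :=
  (forall i j, A i j = 0 \/ A i j = 1) /\ (forall i, A i i = 0).

Definition sais_p (R : realType) (N : nat) (A : 'M[R]_N)
    (beta0 betaa delta : R) (p q : 'I_N -> R) (i : 'I_N) : R :=
  beta0 * (1 - p i - q i) * (\sum_j A i j * p j)
  + betaa * q i * (\sum_j A i j * p j) - delta * p i.

Definition sais_q (R : realType) (N : nat) (A : 'M[R]_N)
    (kappa betaa : R) (p q : 'I_N -> R) (i : 'I_N) : R :=
  kappa * (1 - p i - q i) * (\sum_j A i j * p j)
  - betaa * q i * (\sum_j A i j * p j).

From HB Require Import structures.
From mathcomp Require Import all_boot all_order all_algebra.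
From mathcomp Require Import all_classical all_reals all_analysis.
From mathcomp Require Import complex.
From mathcomp Require Import ring lra.
Set Implicit Arguments. Unset Strict Implicit. Unset Printing Implicit Defensive.
Import Order.TTheory GRing.Theory Num.Theory numFieldNormedType.Exports.
Local Open Scope ring_scope.
Local Open Scope classical_set_scope.

(* The region where p_i, q_i and 1 - p_i - q_i are all nonnegative is forward
   invariant, and inside it the infected fractions satisfy the linear
   differential inequality p' <= (beta0 A - delta) p. Pick rho(A) < mu <
   delta / beta0. Following the solution of (l - A) w = 1 from large l down to
   l = mu gives a positive v with A v = mu v - 1, so c v e^(-(delta - beta0 mu) t)
   is a strict supersolution, and a first-contact argument keeps p below it. *)

(** * Positivity of solutions of differential inequalities *)

Lemma continuous_induction (R : realType) (b : R) (P : R -> Prop) :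
  0 <= b -> P 0 ->
  (forall t, 0 < t <= b -> (forall s, 0 <= s < t -> P s) -> P t) ->
  (forall t, 0 <= t < b -> P t -> exists2 e, 0 < e & forall s, t <= s < t + e -> P s) ->
  forall t, 0 <= t <= b -> P t.
Proof.
move=> b0 P0 Pstep Popen.
pose S := [set t : R | 0 <= t <= b /\ forall s, 0 <= s <= t -> P s].
have S0 : S 0.
  split; first by rewrite lexx b0.
  by move=> s /andP[s0 s0']; have -> : s = 0 by apply/eqP; rewrite eq_le s0 s0'.
have supS : has_sup S by split; [exists 0 | exists b => x [/andP[_ ->]]].
set c := sup S.
have c0 : 0 <= c by apply: sup_upper_bound.
have cb : c <= b by apply: ge_sup; [exists 0 | move=> x [/andP[_ ->]]].
have below_c s : 0 <= s < c -> P s.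
  move=> /andP[s0 sc]; have cs0 : 0 < c - s by rewrite subr_gt0.
  have [x [_ Px] ltx] := sup_adherent cs0 supS.
  by apply: Px; rewrite s0 /=; move: ltx; rewrite /c subKr => /ltW.
have Pc : P c.
  have [->|c_neq0] := eqVneq c 0; first exact: P0.
  by apply: Pstep => //; rewrite cb andbT lt_def c_neq0 c0.
have [cltb|] := ltP c b; last first.
  move=> bc t /andP[t0 tb]; have [tc|ct] := ltP t c; first by apply: below_c; rewrite t0.
  by have -> : t = c by apply/eqP; rewrite eq_le (le_trans tb bc) ct.
have [e e0 Pe] := Popen c (introT andP (conj c0 cltb)) Pc.
pose m := Num.min e (b - c).
have m0 : 0 < m by rewrite lt_min e0 subr_gt0.
have me : m <= e by rewrite ge_min lexx.
have mb : m <= b - c by rewrite ge_min lexx orbT.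
have Sx : S (c + m / 2).
  split; first by apply/andP; split; lra.
  move=> s /andP[s0 sx]; have [sc|cs] := ltP s c; first by apply: below_c; rewrite s0.
  by apply: Pe; rewrite cs /=; lra.
have : c + m / 2 <= c by apply: sup_upper_bound.
lra.
Qed.

Lemma near_right_interval (R : realType) (t : R) (Q : R -> Prop) :
  (\forall s \near t, Q s) -> exists2 e, 0 < e & forall s, t <= s < t + e -> Q s.
Proof.
case/nbhs_ballP => e e0 Qe; exists e => // s /andP[ts st].
by apply: Qe; rewrite /ball /= distrC ger0_norm; lra.
Qed.

Local Notation at_nonneg t := (within [set s | 0 <= s] (nbhs t)).

Lemma ge0_of_gt0_before (R : realType) (f : R -> R) (t : R) : 0 < t ->
  f s @[s --> at_nonneg t] --> f t -> (forall s, 0 <= s < t -> 0 < f s) -> 0 <= f t.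
Proof.
move=> t0 fc fpos; rewrite leNgt; apply/negP => ft0.
have : \forall s \near t, 0 <= s -> f s < 0.
  by have := cvgr_lt (f t) fc 0 ft0; rewrite near_withinE; apply; exact: within_filter.
case/nbhs_ballP => r r0 fneg.
pose m := Num.min r t.
have m0 : 0 < m by rewrite lt_min r0.
have mr : m <= r by rewrite ge_min lexx.
have mt : m <= t by rewrite ge_min lexx orbT.
have := fneg (t - m / 2); rewrite /ball /= opprB addrC subrK ger0_norm; last lra.
have : 0 < f (t - m / 2) by apply: fpos; apply/andP; split; lra.
by move=> ? /(_ ltac:(lra)) /(_ ltac:(lra)); lra.
Qed.

Lemma gt0_near_nonneg (R : realType) (f : R -> R) (t : R) :
  f s @[s --> at_nonneg t] --> f t -> 0 < f t -> \forall s \near t, 0 <= s -> 0 < f s.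
Proof.
by move=> fc ft0; have := cvgr_gt (f t) fc 0 ft0; rewrite near_withinE; apply; exact: within_filter.
Qed.

Lemma positivity_persists (R : realType) (I : finType) (h : I -> R -> R) (b : R) :
  0 <= b ->
  (forall k (t : R), 0 <= t <= b -> h k s @[s --> at_nonneg t] --> h k t) ->
  (forall k, 0 < h k 0) ->
  (forall t, 0 < t <= b -> (forall s k, 0 <= s < t -> 0 < h k s) ->
     (forall k, 0 <= h k t) -> forall k, h k t != 0) ->
  forall t, 0 <= t <= b -> forall k, 0 < h k t.
Proof.
move=> b0 hc h0 hstep; apply: continuous_induction => //.
- move=> t /andP[t0 tb] before.
  have hge0 k : 0 <= h k t.
    by apply: ge0_of_gt0_before => //; [apply: hc; rewrite ltW | move=> s /before].
  move=> k; rewrite lt_def hge0 andbT; apply: hstep => //; first by rewrite t0.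
  by move=> s k' /before.
- move=> t /andP[t0 tb] ht.
  have : \forall s \near t, forall k, 0 <= s -> 0 < h k s.
    apply: (@filter_forall _ _ (fun k s => 0 <= s -> 0 < h k s) (nbhs t) _) => k.
    apply: gt0_near_nonneg => //.
    by apply: hc; rewrite t0 ltW.
  case/near_right_interval => e e0 he; exists e => // s /andP[ts se] k.
  by apply: he; [rewrite ts | exact: le_trans ts].
Qed.

Lemma continuous_within_nonneg_cvg (R : realType) (f : R -> R) (t : R) :
  {within [set s | 0 <= s], continuous f} -> 0 <= t -> f s @[s --> at_nonneg t] --> f t.
Proof.
rewrite continuous_subspace_in => fc t0.
by rewrite (nbhs_subspace_in (A := [set s : R | 0 <= s])) //; exact: fc (mem_set t0).
Qed.

Lemma derive_le0_at_first_zero (R : realType) (h : R -> R) (t dh : R) : 0 < t ->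
  is_derive t 1 h dh -> (forall s, 0 <= s < t -> 0 < h s) -> h t = 0 -> dh <= 0.
Proof.
move=> t0 hd hpos ht; rewrite leNgt; apply/negP => dh0.
have quot : (fun e : R => e^-1 *: (h (e *: 1 + t) - h t)) @ 0^' --> dh.
  by rewrite -(@derive_val _ _ _ _ _ _ _ hd); exact: (@ex_derive _ _ _ _ _ _ _ hd).
have := cvgr_gt _ quot (dh / 2) ltac:(lra).
case/nbhs_ballP => r r0 quot_gt.
pose m := Num.min r t.
have m0 : 0 < m by rewrite lt_min r0.
have mr : m <= r by rewrite ge_min lexx.
have mt : m <= t by rewrite ge_min lexx orbT.
have := quot_gt (- (m / 2)); rewrite /ball /= sub0r opprK ger0_norm; last lra.
have mneq0 : - (m / 2) != 0 by apply/eqP; lra.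
move=> /(_ ltac:(lra) mneq0) /=; rewrite ht subr0 -[(- (m / 2)) *: 1]/(- (m / 2) * 1) mulr1.
have : 0 < h (- (m / 2) + t) by apply: hpos; apply/andP; split; lra.
move=> hm; rewrite -[_ *: _]/(_ * _).
have : (- (m / 2))^-1 * h (- (m / 2) + t) < 0 by rewrite nmulr_rlt0 // invr_lt0; lra.
lra.
Qed.

Lemma barrier_positive (R : realType) (I : finType) (h dh : I -> R -> R) (b : R) :
  0 <= b ->
  (forall k, {within [set s | 0 <= s], continuous (h k)}) ->
  (forall k (t : R), 0 < t -> is_derive t 1 (h k) (dh k t)) ->
  (forall k, 0 < h k 0) ->
  (forall t, 0 < t <= b -> (forall k, 0 <= h k t) -> forall k, h k t = 0 -> 0 < dh k t) ->
  forall t, 0 <= t <= b -> forall k, 0 < h k t.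
Proof.
move=> b0 hc hd h0 touch; apply: positivity_persists => //.
  by move=> k t /andP[t0 _]; exact: continuous_within_nonneg_cvg.
move=> t tb before hge0 k; apply/eqP => hkt.
have /andP[t0 _] := tb.
have := @derive_le0_at_first_zero R _ _ _ t0 (hd k t t0) (fun s st => before s k st) hkt.
by rewrite leNgt touch.
Qed.

Lemma continuous_withinD (R : realType) (A : set R) (f g : R -> R) :
  {within A, continuous f} -> {within A, continuous g} ->
  {within A, continuous (fun s => f s + g s)}.
Proof. by move=> fc gc x; apply: continuousD; [exact: fc | exact: gc]. Qed.

Lemma is_derive_scale_expR (R : realType) (c L x : R) :
  is_derive x 1 (fun s => c * expR (L * s)) (c * (L * expR (L * x))).
Proof.
have dL : is_derive x 1 (fun s : R => L * s) L.
  by have := is_deriveZ L (is_derive_id x 1); rewrite -[L *: 1]/(L * 1) mulr1.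
have := is_deriveZ c (is_derive1_comp (is_derive_expR (L * x)) dL).
by rewrite mulrC.
Qed.

Lemma continuous_scale_expR (R : realType) (c L : R) :
  continuous (fun s => c * expR (L * s)).
Proof.
move=> x; apply: differentiable_continuous; apply/derivable1_diffP.
exact: (@ex_derive _ _ _ _ _ _ _ (is_derive_scale_expR c L x)).
Qed.

Lemma ge0_of_small_gt0 (R : realFieldType) (x m : R) : 0 < m -> (forall e, 0 < e <= m -> 0 < x + e) -> 0 <= x.
Proof.
move=> m0 small; apply/ler_addgt0Pr => e e0.
have := small (Num.min e m); rewrite lt_min e0 m0 ge_min lexx orbT => /(_ isT).
have : Num.min e m <= e by rewrite ge_min lexx.
lra.
Qed.

Lemma mul_ge_interval (R : realDomainType) (a b x y X Y : R) :
  0 <= x -> 0 <= y -> 0 <= X -> 0 <= Y -> -x <= a <= X -> -y <= b <= Y ->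
  -(X * y + x * Y) <= a * b.
Proof.
move=> x0 y0 X0 Y0 /andP[xa aX] /andP[yb bY].
have [a0|a0] := leP 0 a.
  have : 0 <= a * (b + y) by rewrite mulr_ge0 // -lerBlDr sub0r.
  have : 0 <= (X - a) * y by rewrite mulr_ge0 // subr_ge0.
  by move=> ? ?; nra.
have : 0 <= (a + x) * (Y - b) by rewrite mulr_ge0 // ?subr_ge0 // -lerBlDr sub0r.
by nra.
Qed.

(** * A positive solution of (mu - A) v = 1 for mu above the spectral radius *)

Lemma adjacency_sum_ge (R : realType) (N : nat) (A : 'M[R]_N) (x : 'I_N -> R) (lo : R) i :
  adjacency01 A -> lo <= 0 -> (forall j, lo <= x j) -> N%:R * lo <= \sum_j A i j * x j.
Proof.
move=> [A01 _] lo0 xlo; rewrite -[N in N%:R]card_ord mulr_natl -sumr_const.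
by apply: ler_sum => j _; case: (A01 i j) => ->; rewrite ?mul0r ?mul1r.
Qed.

Lemma adjacency_sum_le (R : realType) (N : nat) (A : 'M[R]_N) (x : 'I_N -> R) (hi : R) i :
  adjacency01 A -> 0 <= hi -> (forall j, x j <= hi) -> \sum_j A i j * x j <= N%:R * hi.
Proof.
move=> [A01 _] hi0 xhi; rewrite -[N in N%:R]card_ord mulr_natl -sumr_const.
by apply: ler_sum => j _; case: (A01 i j) => ->; rewrite ?mul0r ?mul1r.
Qed.

Lemma adjacency_sum_ge0 (R : realType) (N : nat) (A : 'M[R]_N) (x : 'I_N -> R) i :
  adjacency01 A -> (forall j, 0 <= x j) -> 0 <= \sum_j A i j * x j.
Proof. by move=> Aadj x0; have := adjacency_sum_ge i Aadj (lexx 0) x0; rewrite mulr0. Qed.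

Lemma adjacency_sum_mono (R : realType) (N : nat) (A : 'M[R]_N) (x y : 'I_N -> R) i :
  adjacency01 A -> (forall j, x j <= y j) -> \sum_j A i j * x j <= \sum_j A i j * y j.
Proof.
by move=> [A01 _] xy; apply: ler_sum => j _; case: (A01 i j) => ->; rewrite ?mul0r ?mul1r.
Qed.

Lemma normc_ge0 (R : rcfType) (z : R[i]) : 0 <= Normc.normc z.
Proof. by case: z => a b; rewrite /Normc.normc sqrtr_ge0. Qed.

Lemma normc_sum (R : rcfType) (I : Type) (r : seq I) (P : pred I) (F : I -> R[i]) :
  Normc.normc (\sum_(j <- r | P j) F j) <= \sum_(j <- r | P j) Normc.normc (F j).
Proof.
elim: r => [|a r IH]; first by rewrite !big_nil Normc.normc0.
rewrite !big_cons; case: (P a) => //.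
by apply: le_trans (le_normcD _ _) _; rewrite lerD2l.
Qed.

Lemma adjacency_eigenvalue_normc_le (R : realType) (N : nat) (A : 'M[R]_N) (z : R[i]) :
  adjacency01 A -> eigenvalue (map_mx (fun x : R => Complex x 0) A) z ->
  Normc.normc z <= N%:R.
Proof.
move=> [A01 _] /eigenvalueP [v vA vneq0].
have [j0 vj0] : exists j, v 0 j != 0.
  apply/existsP; apply: contraR vneq0 => /existsPn vj; apply/eqP/rowP => j.
  by rewrite mxE; apply/eqP; move: (vj j); rewrite negbK.
pose k := [arg max_(k > j0) Normc.normc (v 0 k)]%O.
have vk j : Normc.normc (v 0 j) <= Normc.normc (v 0 k).
  by rewrite /k; case: arg_maxP => //= k' _; apply.
have vk0 : 0 < Normc.normc (v 0 k).
  apply: lt_le_trans (vk j0); rewrite lt_def normc_ge0 andbT.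
  by apply: contra vj0 => /eqP/Normc.eq0_normc ->.
rewrite -(ler_pM2r vk0) -Normc.normcM.
have -> : z * v 0 k = \sum_j v 0 j * Complex (A j k) 0.
  by have := congr1 (fun M : 'rV[R[i]]_N => M 0 k) vA; rewrite !mxE => <-; apply: eq_bigr => j _; rewrite mxE.
apply: le_trans (normc_sum _ _ _) _.
have -> : N%:R * Normc.normc (v 0 k) = \sum_(j < N) Normc.normc (v 0 k).
  by rewrite sumr_const card_ord mulr_natl.
apply: ler_sum => j _; rewrite Normc.normcM.
case: (A01 j k) => ->; last by rewrite Normc.normc1 mulr1.
by rewrite Normc.normc0 mulr0 normc_ge0.
Qed.

Lemma det_neq0_gt_spectral_radius (R : realType) (N : nat) (A : 'M[R]_N) (l : R) :
  adjacency01 A -> 0 <= l -> spectral_radius A < l -> \det (l%:M - A) != 0.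
Proof.
move=> Aadj l0 lrho; apply/negP => /det0P [v vneq0 vA].
set S := [set r : R | exists z : R[i],
  eigenvalue (map_mx (fun x : R => Complex x 0) A) z /\ r = Normc.normc z].
have S_ub : has_ubound S.
  by exists N%:R => r [z [Az ->]]; exact: adjacency_eigenvalue_normc_le Aadj Az.
have Sl : S l.
  exists (Complex l 0); split; last first.
    by rewrite /Normc.normc /= expr0n /= addr0 sqrtr_sqr ger0_norm.
  apply/eigenvalueP; exists (map_mx (real_complex R) v).
    have -> : map_mx (fun x : R => Complex x 0) A = map_mx (real_complex R) A by [].
    have vAl : v *m A = l *: v.
      by move/eqP: vA; rewrite mulmxBr mul_mx_scalar subr_eq0 => /eqP <-.
    by rewrite -map_mxM vAl; apply/matrixP => i j; rewrite !mxE /= rmorphM.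
  apply: contra vneq0 => /eqP v0; apply/eqP/matrixP => i j.
  by have := congr1 (fun M : 'rV[R[i]]_N => M i j) v0; rewrite !mxE; case.
have := ub_le_sup S_ub Sl.
by move: lrho; rewrite /spectral_radius -/S; lra.
Qed.

Lemma horner_char_poly_mx (R : comNzRingType) (n : nat) (A : 'M[R]_n) (x : R) :
  map_mx (horner_eval x) (char_poly_mx A) = x%:M - A.
Proof.
by apply/matrixP => i j; rewrite !mxE /= horner_evalE !hornerE hornerMn hornerX.
Qed.

Lemma horner_char_poly (R : comNzRingType) (n : nat) (A : 'M[R]_n) (x : R) :
  (char_poly A).[x] = \det (x%:M - A).
Proof. by rewrite -horner_char_poly_mx det_map_mx. Qed.

(* The entry [((l - A)^-1 1)_i], written as a rational function of [l] so that
   it is visibly continuous away from the roots of the characteristic polynomial. *)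
Definition resolvent_rowsum (F : fieldType) (n : nat) (A : 'M[F]_n) (l : F) (i : 'I_n) : F :=
  (\sum_k \adj (char_poly_mx A) i k).[l] / (char_poly A).[l].

Lemma resolvent_rowsumP (F : fieldType) (n : nat) (A : 'M[F]_n) (l : F) :
  (char_poly A).[l] != 0 ->
  forall i, l * resolvent_rowsum A l i - \sum_j A i j * resolvent_rowsum A l j = 1.
Proof.
rewrite horner_char_poly => detM i.
set M := l%:M - A.
pose W : 'cV_n := (\det M)^-1 *: (\adj M *m const_mx 1).
have WE j : resolvent_rowsum A l j = W j 0.
  rewrite /resolvent_rowsum horner_char_poly horner_sum !mxE mulrC.
  congr (_ * _); apply: eq_bigr => k _.
  by rewrite -horner_evalE /M -horner_char_poly_mx -map_mx_adj !mxE mulr1.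
have MW : M *m W = const_mx 1.
  by rewrite -scalemxAr mulmxA mul_mx_adj mul_scalar_mx scalerA mulVf // scale1r.
have := congr1 (fun X : 'cV_n => X i 0) MW.
rewrite /M mulmxBl mul_scalar_mx [in RHS]mxE => <-.
rewrite WE !mxE; congr (_ - _); apply: eq_bigr => j _; by rewrite WE.
Qed.

Lemma continuous_resolvent_rowsum (R : realType) (n : nat) (A : 'M[R]_n) (l : R) i :
  (char_poly A).[l] != 0 -> {for l, continuous (fun m => resolvent_rowsum A m i)}.
Proof.
move=> chi_l; apply: continuousM; first exact: continuous_horner.
by apply: continuousV => //; exact: continuous_horner.
Qed.

Lemma adjacency_solution_gt0 (R : realType) (N : nat) (A : 'M[R]_N) (x : 'I_N -> R) (m : R) :
  adjacency01 A -> N%:R < m -> (forall i, m * x i - \sum_j A i j * x j = 1) ->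
  forall i, 0 < x i.
Proof.
move=> Aadj Nm xeq i.
pose k := [arg min_(k < i) x k]%O.
have xk j : x k <= x j by rewrite /k; case: arg_minP => //= k' _; apply.
apply: lt_le_trans (xk i); rewrite ltNge; apply/negP => xk0.
have := adjacency_sum_ge k Aadj xk0 xk.
have := xeq k.
have : (m - N%:R) * x k <= 0 by rewrite pmulr_rle0 // subr_gt0.
nra.
Qed.

Lemma positive_resolvent_solution (R : realType) (N : nat) (A : 'M[R]_N) (mu : R) :
  adjacency01 A -> 0 < mu -> spectral_radius A < mu ->
  exists2 v : 'I_N -> R, forall i, 0 < v i & forall i, mu * v i - \sum_j A i j * v j = 1.
Proof.
(* Follow the solution w of (l - A) w = 1 as l decreases from c to mu: it is
   defined since l > rho(A), positive at l = c by diagonal dominance, and it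
   cannot reach 0 while nonnegative because l w = 1 + A w. *)
move=> Aadj mu0 mu_rho.
pose c := mu + N%:R + 1; pose b : R := N%:R + 1.
have N0 : 0 <= N%:R :> R by [].
pose w s := resolvent_rowsum A (c - s).
have chi_neq0 s : s <= b -> (char_poly A).[c - s] != 0.
  by move=> sb; rewrite horner_char_poly det_neq0_gt_spectral_radius //; rewrite /c /b in sb *; lra.
have weq s : s <= b -> forall i, (c - s) * w s i - \sum_j A i j * w s j = 1.
  by move=> /chi_neq0; exact: resolvent_rowsumP.
have wpos : forall s, 0 <= s <= b -> forall i, 0 < w s i.
  apply: positivity_persists; first by rewrite /b addr_ge0.
  - move=> i t /andP[_ tb]; apply: cvg_within_filter.
    apply: (continuous_comp (f := fun s => c - s) (g := fun l => resolvent_rowsum A l i)).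
      exact: continuousB (cvg_cst _) cvg_id.
    exact: continuous_resolvent_rowsum (chi_neq0 _ tb).
  - apply: adjacency_solution_gt0 (c - 0) Aadj _ (weq 0 _); rewrite /c /b; lra.
  - move=> t /andP[_ tb] _ wge0 i; apply/eqP => wi0.
    have := weq t tb i; have := adjacency_sum_ge0 i Aadj wge0.
    by rewrite wi0 mulr0; lra.
exists (w b) => [|i]; first by apply: wpos; rewrite lexx andbT /b.
by have := weq b (lexx b) i; rewrite /c /b; have -> : mu + N%:R + 1 - (N%:R + 1) = mu by ring.
Qed.

(** * The SAIS system *)

Section SAIS.

Variables (R : realType) (N : nat) (A : 'M[R]_N) (beta0 betaa kappa delta : R).

Hypotheses (Aadj : adjacency01 A) (beta0_gt0 : 0 < beta0) (delta_gt0 : 0 < delta)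
  (kappa_gt0 : 0 < kappa) (betaa_ge0 : 0 <= betaa).

(* [k] = 0, 1, 2 selects the infected, alert and susceptible fraction of node [i]. *)
Definition sais_state (P Q : 'I_N -> R) (k : 'I_3) (i : 'I_N) : R :=
  [:: P i; Q i; 1 - P i - Q i]`_k.

Definition sais_rate (P Q : 'I_N -> R) (k : 'I_3) (i : 'I_N) : R :=
  [:: sais_p A beta0 betaa delta P Q i; sais_q A kappa betaa P Q i;
      - sais_p A beta0 betaa delta P Q i - sais_q A kappa betaa P Q i]`_k.

Let L := 6 * N%:R * (beta0 + betaa + kappa) + delta + 1.

Let L_gt0 : 0 < L.
Proof.
rewrite /L; set X := 6 * _ * _.
have X0 : 0 <= X by rewrite /X !mulr_ge0 // !addr_ge0 // ltW.
by have := delta_gt0; lra.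
Qed.

Lemma sais_coupling_bounds (P Q : 'I_N -> R) (G : R) i :
  0 <= G <= 1 -> (forall k j, - G <= sais_state P Q k j) ->
  [/\ - (N%:R * G) <= \sum_j A i j * P j,
       - (6 * N%:R * G) <= (1 - P i - Q i) * \sum_j A i j * P j
     & - (6 * N%:R * G) <= Q i * \sum_j A i j * P j].
Proof.
move=> /andP[G0 G1] Gle.
have [Pge Qge rge] : [/\ forall j, - G <= P j, forall j, - G <= Q j
    & forall j, - G <= 1 - P j - Q j] by split=> j; [exact: (Gle 0) | exact: (Gle 1) | exact: (Gle 2)].
set S := \sum_j A i j * P j.
have S_lo : - (N%:R * G) <= S by rewrite -mulrN; apply: adjacency_sum_ge => //; lra.
have S_hi : S <= N%:R * 3.
  by apply: adjacency_sum_le => // j; have := Pge j; have := Qge j; have := rge j; lra.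
have NG0 : 0 <= N%:R * G by rewrite mulr_ge0.
have N3 : 0 <= N%:R * 3 :> R by rewrite mulr_ge0.
have S_in : - (N%:R * G) <= S <= N%:R * 3 by rewrite S_lo S_hi.
have -> : 6 * N%:R * G = 3 * (N%:R * G) + G * (N%:R * 3) by ring.
split=> //; apply: mul_ge_interval => //; apply/andP; split.
- by have := rge i; lra.
- by have := Pge i; have := Qge i; lra.
- by have := Qge i; lra.
- by have := Pge i; have := rge i; lra.
Qed.

Lemma sais_rate_at_boundary (P Q : 'I_N -> R) (G : R) k i :
  0 < G <= 1 -> (forall k j, - G <= sais_state P Q k j) -> sais_state P Q k i = - G ->
  0 < sais_rate P Q k i + L * G.
Proof.
move=> /andP[G0 G1] Gle.
have [S_lo rS QS] := sais_coupling_bounds i (introT andP (conj (ltW G0) G1)) Gle.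
set S := \sum_j A i j * P j in S_lo rS QS *.
have N0 : 0 <= N%:R :> R by [].
have NG0 : 0 <= N%:R * G by rewrite mulr_ge0 // ltW.
have GS : G * (- (N%:R * G)) <= G * S := ler_wpM2l (ltW G0) S_lo.
have GN : G * (N%:R * G) <= G * N%:R := ler_wpM2l (ltW G0) (ler_piMr N0 G1).
have LG : L * G = 6 * N%:R * G * (beta0 + betaa + kappa) + delta * G + G by rewrite /L; ring.
have NGb0 := mulr_ge0 NG0 (ltW beta0_gt0).
have NGba := mulr_ge0 NG0 betaa_ge0.
have NGk := mulr_ge0 NG0 (ltW kappa_gt0).
have dG : 0 < delta * G by rewrite mulr_gt0.
rewrite /sais_state /sais_rate /sais_p /sais_q -/S LG.
case: k => [[|[|[|//]]]] /= _ border; rewrite ?border.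
- have := ler_wpM2l (ltW beta0_gt0) rS; have := ler_wpM2l betaa_ge0 QS.
  nra.
- have := ler_wpM2l (ltW kappa_gt0) rS.
  have := ler_wpM2l betaa_ge0 GS; have := ler_wpM2l betaa_ge0 GN.
  nra.
- have b0k : 0 <= beta0 + kappa by rewrite addr_ge0 ?ltW.
  have := ler_wpM2l b0k GS; have := ler_wpM2l b0k GN.
  have Pi : - G <= P i by have := Gle 0 i.
  have := ler_wpM2l (ltW delta_gt0) Pi.
  nra.
Qed.

Lemma sais_p_le_linearized (P Q : 'I_N -> R) i :
  betaa <= beta0 -> (forall j, 0 <= P j) -> 0 <= Q i ->
  sais_p A beta0 betaa delta P Q i <= beta0 * \sum_j A i j * P j - delta * P i.
Proof.
move=> ba_b0 P0 Qi0; rewrite /sais_p.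
set S := \sum_j A i j * P j.
have S0 : 0 <= S by exact: adjacency_sum_ge0.
have : 0 <= beta0 * P i * S by rewrite !mulr_ge0 // ltW.
have : 0 <= (beta0 - betaa) * Q i * S by rewrite !mulr_ge0 // subr_ge0.
by move=> ? ?; nra.
Qed.

Variables (p q : R -> 'I_N -> R).
Hypotheses
  (p_cont : forall i, {within [set x : R | 0 <= x], continuous (fun s => p s i)})
  (q_cont : forall i, {within [set x : R | 0 <= x], continuous (fun s => q s i)})
  (p_deriv : forall i (t : R), 0 < t ->
     is_derive t 1 (fun s => p s i) (sais_p A beta0 betaa delta (p t) (q t) i))
  (q_deriv : forall i (t : R), 0 < t ->
     is_derive t 1 (fun s => q s i) (sais_q A kappa betaa (p t) (q t) i))
  (init : forall i, 0 <= p 0 i /\ 0 <= q 0 i /\ p 0 i + q 0 i <= 1).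

Lemma sais_state_continuous k i :
  {within [set x : R | 0 <= x], continuous (fun s => sais_state (p s) (q s) k i)}.
Proof.
case: k => [[|[|[|//]]] ?] x; rewrite /sais_state /=; [exact: p_cont | exact: q_cont |].
apply: (@continuousB _ _ (subspace [set x : R | 0 <= x]) (fun s => 1 - p s i) (fun s => q s i));
  last exact: q_cont.
apply: (@continuousB _ _ (subspace [set x : R | 0 <= x]) (fun=> 1 : R) (fun s => p s i));
  [exact: cvg_cst | exact: p_cont].
Qed.

Lemma sais_state_derive k i (t : R) : 0 < t ->
  is_derive t 1 (fun s => sais_state (p s) (q s) k i) (sais_rate (p t) (q t) k i).
Proof.
move=> t0; case: k => [[|[|[|//]]] ?]; rewrite /sais_state /sais_rate /=;
  [exact: p_deriv | exact: q_deriv |].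
have := is_deriveB (is_deriveB (is_derive_cst (1 : R) t 1) (p_deriv i t0)) (q_deriv i t0).
by rewrite sub0r.
Qed.

Lemma sais_state_ge0 (t : R) : 0 <= t -> forall k i, 0 <= sais_state (p t) (q t) k i.
Proof.
(* At a first zero the derivative is only >= 0, so we show that the state
   shifted by eps e^(L t) stays positive and let eps go to 0. *)
move=> t0 k i; apply: (ge0_of_small_gt0 ltr01) => e /andP[e0 e1].
pose eps := e * expR (- (L * t)).
have eps0 : 0 < eps by rewrite mulr_gt0 // expR_gt0.
have : forall s, 0 <= s <= t -> forall ki : 'I_3 * 'I_N,
    0 < sais_state (p s) (q s) ki.1 ki.2 + eps * expR (L * s).
  apply: (barrier_positive (dh := fun ki s =>
    sais_rate (p s) (q s) ki.1 ki.2 + eps * (L * expR (L * s)))) => //.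
  - move=> ki; apply: continuous_withinD; first exact: sais_state_continuous.
    by apply: continuous_subspaceT; exact: continuous_scale_expR.
  - move=> ki s s0; exact: is_deriveD (sais_state_derive _ _ s0) (is_derive_scale_expR _ _ _).
  - move=> [[[|[|[|//]]] ?] j]; rewrite /sais_state /= mulr0 expR0 mulr1;
      have [p0 [q0 pq1]] := init j; lra.
  - move=> s /andP[s0 st] hge0 ki hki.
    set G := eps * expR (L * s) in hge0 hki *.
    have G0 : 0 < G by rewrite mulr_gt0 // expR_gt0.
    have G1 : G <= 1.
      have : expR (- (L * t) + L * s) <= 1 by rewrite expR_le1; have := L_gt0; nra.
      rewrite /G /eps -mulrA -expRD => E1; apply: le_trans e1; exact: ler_piMr (ltW e0) E1.
    have -> : eps * (L * expR (L * s)) = L * G by rewrite /G mulrCA.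
    apply: sais_rate_at_boundary; first by rewrite G0 G1.
      by move=> k' j; have := hge0 (k', j); lra.
    by lra.
move=> /(_ t _ (k, i)); rewrite /eps -mulrA -expRD addNr expR0 mulr1.
by apply; rewrite t0 lexx.
Qed.

Lemma sais_p_contact (P Q v : 'I_N -> R) (mu c : R) i :
  betaa <= beta0 -> (forall j, 0 <= P j) -> 0 <= Q i -> 0 < c ->
  (forall j, mu * v j - \sum_k A j k * v k = 1) ->
  (forall j, P j <= c * v j) -> P i = c * v i ->
  0 < - (delta - beta0 * mu) * (c * v i) - sais_p A beta0 betaa delta P Q i.
Proof.
move=> ba_b0 P0 Qi0 c0 veq Pv Pi.
have S_le : \sum_k A i k * P k <= c * (mu * v i - 1).
  have <- : \sum_k A i k * v k = mu * v i - 1 by have := veq i; lra.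
  have -> : c * \sum_k A i k * v k = \sum_k A i k * (c * v k).
    by rewrite mulr_sumr; apply: eq_bigr => k _; rewrite mulrCA.
  exact: adjacency_sum_mono.
have := sais_p_le_linearized ba_b0 P0 Qi0.
have := ler_wpM2l (ltW beta0_gt0) S_le.
have : 0 < beta0 * c by rewrite mulr_gt0.
by rewrite Pi => ? ? ?; lra.
Qed.

Lemma sais_p_decay (mu : R) (v : 'I_N -> R) :
  betaa <= beta0 -> (forall i, 0 < v i) -> (forall i, mu * v i - \sum_j A i j * v j = 1) ->
  forall t, 0 <= t -> forall i, p t i < 2 * mu * v i * expR (- ((delta - beta0 * mu) * t)).
Proof.
move=> ba_b0 vpos veq t t0 i.
set alpha := delta - beta0 * mu.
have muv j : 1 <= mu * v j.
  by have := veq j; have := adjacency_sum_ge0 j Aadj (fun k => ltW (vpos k)); lra.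
have mu0 : 0 < mu by rewrite -(pmulr_lgt0 _ (vpos i)); have := muv i; lra.
pose h j s := 2 * mu * v j * expR (- alpha * s) - p s j.
have : forall s, 0 <= s <= t -> forall j, 0 < h j s.
  apply: (barrier_positive (dh := fun j s => 2 * mu * v j * (- alpha * expR (- alpha * s))
    - sais_p A beta0 betaa delta (p s) (q s) j)); first exact: t0.
  - move=> j; apply: continuous_withinD; last by move=> x; apply: continuousN; exact: p_cont.
    by apply: continuous_subspaceT; exact: continuous_scale_expR.
  - by move=> j s s0; exact: is_deriveB (is_derive_scale_expR _ _ _) (p_deriv j s0).
  - move=> j; rewrite /h mulr0 expR0 mulr1; have := muv j; have [p0 [q0 pq1]] := init j; lra.
  - move=> s /andP[s0 _] hge0 j hj.
    have c0 : 0 < 2 * mu * expR (- alpha * s) by rewrite !mulr_gt0 // expR_gt0.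
    have P0 k : 0 <= p s k by exact: (sais_state_ge0 (ltW s0) 0 k).
    have Q0 : 0 <= q s j by exact: (sais_state_ge0 (ltW s0) 1 j).
    have := sais_p_contact ba_b0 P0 Q0 c0 veq.
    have ev k : 2 * mu * v k * expR (- alpha * s) = 2 * mu * expR (- alpha * s) * v k.
      by rewrite mulrAC.
    have -> : 2 * mu * v j * (- alpha * expR (- alpha * s))
      = - (delta - beta0 * mu) * (2 * mu * expR (- alpha * s) * v j) by rewrite /alpha; ring.
    by apply=> [k|]; rewrite -ev; [have := hge0 k | have := hj]; rewrite /h; lra.
move=> /(_ t _ i); rewrite /h t0 lexx mulNr => /(_ isT); lra.
Qed.

End SAIS.

Theorem theorem2 (R : realType) (N : nat) (A : 'M[R]_N)
  (beta0 betaa kappa delta : R) (p q : R -> 'I_N -> R) :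
  adjacency01 A ->
  0 < beta0 -> 0 < delta -> 0 < kappa -> 0 <= betaa -> betaa < beta0 ->
  (forall i, {within [set x : R | 0 <= x], continuous (fun s => p s i)}) ->
  (forall i, {within [set x : R | 0 <= x], continuous (fun s => q s i)}) ->
  (forall (i : 'I_N) (t : R), 0 < t ->
     is_derive t 1 (fun s => p s i) (sais_p A beta0 betaa delta (p t) (q t) i)) ->
  (forall (i : 'I_N) (t : R), 0 < t ->
     is_derive t 1 (fun s => q s i) (sais_q A kappa betaa (p t) (q t) i)) ->
  (forall i, 0 <= p 0 i /\ 0 <= q 0 i /\ p 0 i + q 0 i <= 1) ->
  beta0 / delta * spectral_radius A < 1 ->
  exists C alpha : R, 0 < C /\ 0 < alpha /\
    forall t, 0 <= t -> forall i, `|p t i| <= C * expR (- (alpha * t)).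
Proof.
move=> Aadj b0 d0 k0 ba0 ba_b0 pc qc pd qd init tau_rho.
set rho := spectral_radius A in tau_rho.
have rho_lt : Num.max rho 0 < delta / beta0.
  rewrite gt_max divr_gt0 // andbT ltr_pdivlMr // mulrC.
  by move: tau_rho; rewrite mulrAC ltr_pdivrMr // mul1r.
pose mu := (Num.max rho 0 + delta / beta0) / 2.
have [mu_gt mu_lt] := midf_lt rho_lt; rewrite -/mu in mu_gt mu_lt.
have mu0 : 0 < mu by apply: le_lt_trans mu_gt; rewrite le_max lexx orbT.
have mu_rho : rho < mu by apply: le_lt_trans mu_gt; rewrite le_max lexx.
have alpha0 : 0 < delta - beta0 * mu by rewrite subr_gt0 mulrC -ltr_pdivlMr.
have [v vpos veq] := positive_resolvent_solution Aadj mu0 mu_rho.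
have v_ge0 j : 0 <= v j by exact: ltW.
have vsum_ge0 : 0 <= \sum_j v j by exact: sumr_ge0.
exists (2 * mu * \sum_j v j + 1), (delta - beta0 * mu); split; last split => //.
  by apply: ltr_wpDl ltr01; rewrite mulr_ge0 // mulr_ge0 // ltW.
move=> t t0 i.
have p_ge0 := sais_state_ge0 Aadj b0 d0 k0 ba0 pc qc pd qd init t0 0 i.
have p_lt := sais_p_decay Aadj b0 d0 k0 ba0 pc qc pd qd init (ltW ba_b0) vpos veq t0 i.
rewrite ger0_norm //; apply: (le_trans (ltW p_lt)); rewrite ler_wpM2r ?expR_ge0 //.
have vi_le : v i <= \sum_j v j by rewrite (bigD1 i) //= lerDl sumr_ge0.
have : 2 * mu * v i <= 2 * mu * \sum_j v j by rewrite ler_wpM2l // mulr_ge0 // ltW.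
by move=> ?; lra.
Qed.
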